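(* Let $m\ge4$. Let $A$ be the $m\times m$ coloring matrix whose rows $1$ and $2$ are zero, whose rows $3,4,\dots,m-1$ each have a single $1$ in column $2$ and zeros elsewhere, and whose row $m$ has ones in columns $1$ and $2$ and zeros elsewhere. Let $B$ be the $m\times m$ coloring matrix whose row $1$ is zero, whose rows $2$ and $3$ each have a single $1$ in column $m$ and zeros elsewhere, and whose rows $4,\dots,m$ each have a single $1$ in column $1$ and zeros elsewhere. Then for all $n\ge2$, $t_A(n)=t_B(n)=2^{n-1}+m-3$ (and $t_A(1)=t_B(1)=m$). However, $A$ and $B$ are not strongly tree coloring equivalent.
   Context: A plane tree is an unlabeled rooted tree in which the children of every vertex are linearly ordered. A coloring matrix is an $m\times m$ matrix $A=(a_{ij})$ with entries in $\{0,1\}$. An $A$-coloring of a plane tree assigns to each vertex a color in $\{1,\dots,m\}$ such that whenever a vertex of color $j$ is a child of a vertex of color $i$, $a_{ij}=1$. Let $t_A(n)$ be the number of pairs (plane tree with $n$ vertices, $A$-coloring of it) and $t_A^{(i)}(n)$ the number of those with root color $i$. Two $m\times m$ coloring matrices $A,B$ are strictly tree coloring equivalent if $t_A^{(i)}(n)=t_B^{(i)}(n)$ for all $n\ge1$ and all $i$; they are strongly tree coloring equivalent if there is an $m\times m$ permutation matrix $P$ such that $P^TAP$ and $B$ are strictly tree coloring equivalent. *)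

From HB Require Import structures.
From mathcomp Require Import all_boot all_order all_algebra all_fingroup.
Set Implicit Arguments. Unset Strict Implicit. Unset Printing Implicit Defensive.
Import GRing.Theory.
Local Open Scope ring_scope.

(* Colors are 'I_m (color k+1 of the paper is the ordinal k).
   A pair (plane tree, coloring of its vertices) is the same thing as a plane
   tree whose vertices carry a label in 'I_m: a vertex with its ordered list of
   children subtrees. *)
Inductive ctree (m : nat) : Type :=
  CNode : 'I_m -> seq (ctree m) -> ctree m.

Definition root_color m (t : ctree m) : 'I_m := let: CNode c _ := t in c.

Fixpoint nverts m (t : ctree m) : nat :=
  let: CNode _ ts := t in (sumn (map (@nverts m) ts)).+1.

Definition coloring_matrix m (A : 'M[nat]_m) : Prop :=
  forall i j, A i j = 0%N \/ A i j = 1%N.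

Fixpoint is_Acoloring m (A : 'M[nat]_m) (t : ctree m) : bool :=
  let: CNode c ts := t in
  all (fun s => (A c (root_color s) == 1%N) && is_Acoloring A s) ts.

Definition has_card (T : Type) (P : T -> Prop) (k : nat) : Prop :=
  exists f : 'I_k -> T, injective f /\ (forall x, P x <-> exists j, f j = x).

Definition tA_is m (A : 'M[nat]_m) (n k : nat) : Prop :=
  has_card (fun t : ctree m => is_Acoloring A t /\ nverts t = n) k.

Definition tAi_is m (A : 'M[nat]_m) (i : 'I_m) (n k : nat) : Prop :=
  has_card (fun t : ctree m =>
    is_Acoloring A t /\ root_color t = i /\ nverts t = n) k.

Definition strictly_tc_equiv m (A B : 'M[nat]_m) : Prop :=
  forall (n : nat) (i : 'I_m) (k : nat), (1 <= n)%N ->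
    (tAi_is A i n k <-> tAi_is B i n k).

Definition strongly_tc_equiv m (A B : 'M[nat]_m) : Prop :=
  exists P : 'M[nat]_m, is_perm_mx P /\ strictly_tc_equiv (P^T *m A *m P) B.

(* The matrices of the theorem (0-indexed). *)
Definition matA m : 'M[nat]_m :=
  \matrix_(i < m, j < m)
    (if (2 <= i <= m - 2)%N then (nat_of_ord j == 1%N : nat)
     else if nat_of_ord i == (m - 1)%N then ((j <= 1)%N : nat) else 0%N).

Definition matB m : 'M[nat]_m :=
  \matrix_(i < m, j < m)
    (if (1 <= i <= 2)%N then (nat_of_ord j == (m - 1)%N : nat)
     else if (3 <= i)%N then (nat_of_ord j == 0%N : nat) else 0%N).

(* Every count is read off the sets C(i) = {j | a_ij = 1} of admissible child
   colors.  If every color in C(c) is a sink, a tree rooted at c is c over a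
   word of leaves in C(c), so there are |C(c)|^(n-1) such trees on n vertices:
   this covers every root color of A and the root colors 0, 3, ..., m-1 of B.
   Under a root of color 1 or 2 of B every child is a broom (color m-1 over
   leaves of color 0), so the forest below the root is a composition of n-1,
   and there are 2^(n-2) of them.  Finally, the two-vertex trees rooted at i
   are counted by |C(i)|, so a strong equivalence would match the row sums of
   A and B through a permutation; but row m-1 of A has two ones while no row
   of B has more than one. *)

From mathcomp Require Import all_boot all_order all_algebra all_fingroup.
From Stdlib Require List.
From HB Require Import structures.
From mathcomp Require Import zify.
Set Implicit Arguments. Unset Strict Implicit. Unset Printing Implicit Defensive.

Section HasCard.
Variables (T : eqType) (P : T -> Prop).

Lemma has_card_uniq_seq (s : seq T) :
  uniq s -> (forall x, P x <-> x \in s) -> has_card P (size s).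
Proof.
move=> s_uniq Ps; exists (tnth (in_tuple s)); split; first exact/tuple_uniqP.
move=> x; rewrite Ps; split; first by case/(tnthP (in_tuple s)) => i ->; exists i.
by case=> i <-; apply/(tnthP (in_tuple s)); exists i.
Qed.

Lemma has_cardP k : has_card P k ->
  exists s : seq T, [/\ uniq s, forall x, P x <-> x \in s & size s = k].
Proof.
case=> f [f_inj Pf]; exists [seq f j | j <- enum 'I_k]; split.
- by rewrite map_inj_uniq ?enum_uniq.
- move=> x; rewrite Pf; split; first by case=> j <-; rewrite map_f ?mem_enum.
  by case/mapP => j _ ->; exists j.
- by rewrite size_map size_enum_ord.
Qed.

Lemma has_card_unique k1 k2 : has_card P k1 -> has_card P k2 -> k1 = k2.
Proof.
case/has_cardP => s1 [u1 P1 <-] /has_cardP [s2 [u2 P2 <-]].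
by apply/perm_size/uniq_perm => // x; apply/idP/idP => [/P1/P2 | /P2/P1].
Qed.

End HasCard.

Fixpoint words (T : Type) (s : seq T) (k : nat) : seq (seq T) :=
  if k is k'.+1 then [seq x :: w | x <- s, w <- words s k'] else [:: [::]].

Lemma size_words (T : Type) (s : seq T) k : size (words s k) = size s ^ k.
Proof. by elim: k => //= k IH; rewrite size_allpairs IH expnS. Qed.

Lemma mem_words (T : eqType) (s : seq T) k w :
  (w \in words s k) = (size w == k) && all (mem s) w.
Proof.
elim: k w => [|k IH] [|x w] //=.
  by apply/negbTE/allpairsP => -[[? ?] [_ _]].
apply/allpairsP/andP => [[[y v] [ys vs [-> ->]]]|[sz /andP[xs ws]]].
  by move: vs; rewrite IH /= eqSS ys => /andP[-> ->].
by exists (x, w); rewrite /= IH -eqSS sz.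
Qed.

Lemma words_uniq (T : eqType) (s : seq T) k : uniq s -> uniq (words s k).
Proof.
move=> s_uniq; elim: k => //= k IH; rewrite allpairs_uniq //.
by move=> [x w] [y v] _ _ [-> ->].
Qed.

(* [c] encodes the composition of [N] with parts [c_1 + 1, ..., c_r + 1]. *)
Fixpoint compositions (N : nat) : seq (seq nat) :=
  if N is N'.+1 then
    [seq 0 :: c | c <- compositions N'] ++
    [seq (head 0 c).+1 :: behead c | c <- compositions N' & c != [::]]
  else [:: [::]].

Lemma compositionsS N : compositions N.+1 =
  [seq 0 :: c | c <- compositions N] ++
  [seq (head 0 c).+1 :: behead c | c <- compositions N & c != [::]].
Proof. by []. Qed.

Lemma mem_compositions N c : (c \in compositions N) = (sumn (map S c) == N).
Proof.
elim: N c => [|N IH] [|[|x] c] //=; rewrite ?inE // mem_cat.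
- by apply/negbTE; rewrite negb_or; apply/andP; split; apply/mapP => -[[|? ?]].
- rewrite (mem_map (fun a b => _)) ?IH; last by move=> a b [].
  suff -> : (0 :: c \in [seq (head 0 c).+1 :: behead c
                           | c <- compositions N & c != [::]]) = false.
    by rewrite orbF eqSS.
  by apply/negbTE/mapP => -[[|a b]].
- have -> : (x.+1 :: c \in [seq 0 :: c | c <- compositions N]) = false.
    by apply/negbTE/mapP => -[].
  rewrite /= addSn eqSS -[_ == N]/(sumn (map S (x :: c)) == N) -IH.
  apply/mapP/idP => [[[|a b]]|h]; first by rewrite mem_filter eqxx.
    by rewrite mem_filter => /andP[_ h] [-> ->].
  by exists (x :: c); rewrite // mem_filter.
Qed.

Lemma compositions_uniq N : uniq (compositions N).
Proof.
elim: N => //= N IH; rewrite cat_uniq map_inj_uniq ?IH //=; last by move=> a b [].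
apply/andP; split.
  apply/hasPn => y /mapP [[|a b]]; rewrite mem_filter ?eqxx // => _ ->.
  by apply/mapP => -[].
rewrite map_inj_in_uniq ?filter_uniq // => -[|a b] [|a' b'];
  by rewrite !mem_filter //= => _ _ [-> ->].
Qed.

Lemma size_compositions N : size (compositions N.+1) = 2 ^ N.
Proof.
elim: N => // N IH; rewrite compositionsS size_cat !size_map.
rewrite (@eq_in_filter _ _ predT) ?filter_predT ?IH ?expnS ?mul2n -?addnn //.
by move=> c; rewrite mem_compositions; case: c.
Qed.

Section ColoredTrees.
Variable m : nat.
Implicit Types (M N : 'M[nat]_m) (c d e : 'I_m) (t : ctree m) (ts : seq (ctree m)).

Lemma ctree_nested_ind (P : ctree m -> Prop) :
  (forall c ts, (forall s, List.In s ts -> P s) -> P (CNode c ts)) -> forall t, P t.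
Proof.
move=> IHnode; fix IH 1 => -[c ts]; apply: IHnode.
elim: ts => [|s ts IHts] x; first by case.
by case=> [<-|]; [exact: IH | exact: IHts].
Qed.

Fixpoint gentree_of_ctree t : GenTree.tree 'I_m :=
  let: CNode c ts := t in
  GenTree.Node 0 (GenTree.Leaf c :: map gentree_of_ctree ts).

Fixpoint ctree_of_gentree (g : GenTree.tree 'I_m) : option (ctree m) :=
  if g is GenTree.Node _ (GenTree.Leaf c :: gs) then
    Some (CNode c (pmap ctree_of_gentree gs))
  else None.

Lemma gentree_of_ctreeK : pcancel gentree_of_ctree ctree_of_gentree.
Proof.
elim/ctree_nested_ind => c ts IH /=; congr (Some (CNode c _)).
elim: ts IH => //= s ts IHts IH.
by rewrite IH /=; [rewrite IHts // => x hx; apply: IH; right | left].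
Qed.

HB.instance Definition _ := Countable.copy (ctree m) (pcan_type gentree_of_ctreeK).

Definition leaf c := CNode c [::].

Definition child_colors M c : {set 'I_m} := [set j | M c j == 1%N].

Lemma is_Acoloring_node M c ts : is_Acoloring M (CNode c ts) =
  all (fun s => (root_color s \in child_colors M c) && is_Acoloring M s) ts.
Proof. by apply: eq_all => s; rewrite inE. Qed.

Lemma leaf_inj : injective leaf. Proof. by move=> c d []. Qed.

Lemma nverts_gt0 t : 0 < nverts t. Proof. by case: t. Qed.

Lemma nverts_eq1 t : nverts t = 1 -> t = leaf (root_color t).
Proof. by case: t => c [|s ts] //= [] nt; exfalso; have := nverts_gt0 s; lia. Qed.

Lemma nverts_leaves c w : nverts (CNode c (map leaf w)) = (size w).+1.
Proof. by elim: w => //= d w [->]. Qed.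

Lemma Acoloring_leaves M c w :
  is_Acoloring M (CNode c (map leaf w)) = all (mem (child_colors M c)) w.
Proof. by rewrite is_Acoloring_node all_map; apply: eq_all => d /=; rewrite andbT. Qed.

Lemma Acoloring_sink M t :
  child_colors M (root_color t) = set0 -> is_Acoloring M t -> t = leaf (root_color t).
Proof. by case: t => c [|s ts] // sink_c; rewrite is_Acoloring_node sink_c /= inE. Qed.

Lemma Acoloring_depth1 M c ts :
  {in child_colors M c, forall j, child_colors M j = set0} ->
  is_Acoloring M (CNode c ts) -> ts = map leaf (map (@root_color _) ts).
Proof.
move=> sinks; rewrite is_Acoloring_node; elim: ts => //= s ts IH.
case/andP => /andP[cs Ms] /IH <-; congr (_ :: _).
exact/(Acoloring_sink _ Ms)/sinks.
Qed.

Lemma tAi_leaf_trees M c k :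
  (forall t, is_Acoloring M t -> root_color t = c -> nverts t = k.+1 ->
     exists w, t = CNode c (map leaf w)) ->
  tAi_is M c k.+1 (#|child_colors M c| ^ k).
Proof.
move=> leaf_tree; rewrite cardE -size_words.
rewrite -(size_map (fun w => CNode c (map leaf w))); apply: has_card_uniq_seq.
  by rewrite map_inj_uniq ?words_uniq ?enum_uniq // => w v [] /(inj_map leaf_inj).
have mem_children w : all (mem (enum (child_colors M c))) w = all (mem (child_colors M c)) w.
  by apply: eq_all => d; rewrite /= mem_enum.
move=> t; split.
  case=> Mt [rt nt]; have [w tE] := leaf_tree t Mt rt nt; subst t.
  apply: map_f; rewrite mem_words mem_children -Acoloring_leaves Mt andbT.
  by rewrite nverts_leaves in nt; case: nt => ->.
case/mapP => w; rewrite mem_words mem_children => /andP[/eqP sz ws] ->.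
by rewrite Acoloring_leaves nverts_leaves sz.
Qed.

Lemma tAi_one M c : tAi_is M c 1 1.
Proof.
rewrite -(expn0 #|child_colors M c|).
by apply: tAi_leaf_trees => t _ <- /nverts_eq1 ->; exists [::].
Qed.

Lemma tAi_two M c : tAi_is M c 2 #|child_colors M c|.
Proof.
rewrite -(expn1 #|child_colors M c|).
apply: tAi_leaf_trees => -[d [|s [|s' ts]]] //= _ <- nt.
  have s1 : nverts s = 1 by lia.
  by exists [:: root_color s]; rewrite {1}(nverts_eq1 s1).
by exfalso; have := nverts_gt0 s; have := nverts_gt0 s'; lia.
Qed.

Lemma tAi_depth1 M c k :
  {in child_colors M c, forall j, child_colors M j = set0} ->
  tAi_is M c k.+1 (#|child_colors M c| ^ k).
Proof.
move=> sinks; apply: tAi_leaf_trees => -[d ts] Mt /= dc _; subst d.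
by exists (map (@root_color _) ts); rewrite -(Acoloring_depth1 sinks Mt).
Qed.

Definition broom c d k := CNode c (nseq k (leaf d)).

Lemma nverts_broom c d k : nverts (broom c d k) = k.+1.
Proof. by rewrite /broom -map_nseq nverts_leaves size_nseq. Qed.

Lemma broom_inj c d : injective (broom c d).
Proof. by move=> k k' /(congr1 (@nverts _)); rewrite !nverts_broom => -[]. Qed.

Lemma Acoloring_broom M c d k : d \in child_colors M c -> is_Acoloring M (broom c d k).
Proof. by move=> cd; rewrite /broom -map_nseq Acoloring_leaves all_nseq /= cd orbT. Qed.

Lemma Acoloring_single_child M c d t :
  child_colors M c = [set d] -> child_colors M d = set0 ->
  is_Acoloring M t -> root_color t = c -> t = broom c d (nverts t).-1.
Proof.
move=> cd d_sink; case: t => c0 ts Mt rt; have {rt} c0c : c0 = c := rt; subst c0.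
have sink : {in child_colors M c, forall j, child_colors M j = set0}.
  by move=> j; rewrite cd inE => /eqP ->.
have /all_pred1P rts : all (pred1 d) (map (@root_color _) ts).
  move: (Mt); rewrite is_Acoloring_node all_map => /allP Mts.
  by apply/allP => s /Mts; rewrite cd inE => /andP[].
have tsE : ts = nseq (size ts) (leaf d).
  by rewrite {1}(Acoloring_depth1 sink Mt) rts map_nseq size_map.
by rewrite tsE -/(broom c d (size ts)) nverts_broom.
Qed.

Lemma tAi_brooms M c d e k :
  child_colors M c = [set d] -> child_colors M d = [set e] ->
  child_colors M e = set0 -> tAi_is M c k.+1 (size (compositions k)).
Proof.
move=> cd de e_sink; rewrite -(size_map (fun js => CNode c (map (broom d e) js))).
have nverts_brooms js : nverts (CNode c (map (broom d e) js)) = (sumn (map S js)).+1.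
  by rewrite /= -map_comp (eq_map (@nverts_broom d e)).
apply: has_card_uniq_seq.
  rewrite map_inj_uniq ?compositions_uniq // => js js' [].
  exact/inj_map/broom_inj.
move=> t; split.
  case: t => c0 ts [Mt [rt nt]]; have {rt} c0c : c0 = c := rt; subst c0.
  have tsE : ts = map (broom d e) (map (fun s => (nverts s).-1) ts).
    move: Mt; rewrite is_Acoloring_node => /allP Mts.
    rewrite -map_comp map_id_in // => s /Mts; rewrite cd inE => /andP[/eqP rs Ms].
    by rewrite /= -(Acoloring_single_child de e_sink Ms rs).
  rewrite tsE; apply: map_f.
  by rewrite mem_compositions -eqSS -nverts_brooms -tsE nt.
case/mapP => js; rewrite mem_compositions => /eqP js_k ->.
split; last by rewrite nverts_brooms js_k.
rewrite is_Acoloring_node all_map; apply/allP => j _; apply/andP; split.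
  by rewrite cd set11.
by rewrite Acoloring_broom // de set11.
Qed.

Lemma tA_is_sum M n (k : 'I_m -> nat) :
  (forall i, tAi_is M i n (k i)) -> tA_is M n (\sum_i k i).
Proof.
move=> tAi; have [s sP] : exists s : 'I_m -> seq (ctree m), forall i,
    [/\ uniq (s i), forall t, is_Acoloring M t /\ root_color t = i /\ nverts t = n <-> t \in s i
      & size (s i) = k i].
  exact: fin_all_exists (fun i => has_cardP (tAi i)).
have root_s i t : t \in s i -> root_color t = i by case: (sP i) => _ sPi _ /sPi [_ []].
have -> : \sum_i k i = size [seq t | i <- enum 'I_m, t <- s i].
  rewrite size_allpairs_dep sumnE big_map big_enum /=.
  by apply: eq_bigr => i _; case: (sP i).
apply: has_card_uniq_seq.
  rewrite allpairs_uniq_dep ?enum_uniq //; first by move=> i _; case: (sP i).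
  move=> _ _ /allpairsPdep [i [t [_ ti ->]]] /allpairsPdep [i' [t' [_ t'i' ->]]] /= tt'.
  by subst t'; move: (root_s _ _ ti) (root_s _ _ t'i') => -> ->.
move=> t; split.
  case=> Mt nt; apply/allpairsPdep; exists (root_color t), t; rewrite mem_enum.
  by split=> //; case: (sP (root_color t)) => _ sPi _; apply/sPi.
case/allpairsPdep => i [t' [_ ti ->]].
by case: (sP i) => _ sPi _; case/sPi: ti => ? [_ ?].
Qed.

Lemma tA_is_one M : tA_is M 1 m.
Proof.
rewrite -[X in tA_is _ _ X]card_ord -sum1_card.
by apply: tA_is_sum => i; apply: tAi_one.
Qed.

Lemma strictly_tc_equiv_card_child_colors M N i :
  strictly_tc_equiv M N -> #|child_colors M i| = #|child_colors N i|.
Proof.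
move=> MN; apply: (has_card_unique (tAi_two M i)).
exact/(MN 2 i _ isT).2/tAi_two.
Qed.

Lemma card_child_colors_conj M (s : 'S_m) i :
  #|child_colors ((perm_mx s)^T *m M *m perm_mx s)%R (s i)| = #|child_colors M i|.
Proof.
have conjE j j' : ((perm_mx s)^T *m M *m perm_mx s)%R j j' = M (s^-1 j)%g (s^-1 j')%g.
  by rewrite tr_perm_mx -row_permE -[s in perm_mx s]invgK -col_permE !mxE.
rewrite -(card_preimset (child_colors M i) (@perm_inj _ s^-1)).
by apply: eq_card => j; rewrite !inE conjE permK.
Qed.

Lemma strongly_tc_equiv_card_child_colors M N :
  strongly_tc_equiv M N ->
  exists s : 'S_m, forall i, #|child_colors N (s i)| = #|child_colors M i|.
Proof.
case=> _ [/is_perm_mxP [s ->] MN]; exists s => i.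
by rewrite -(strictly_tc_equiv_card_child_colors _ MN) card_child_colors_conj.
Qed.

End ColoredTrees.

Lemma nat_of_bool_01 (b : bool) : b = 0 :> nat \/ b = 1 :> nat.
Proof. by case: b; [right | left]. Qed.

Lemma sum_ord_first3_last (F : nat -> nat) n :
  \sum_(i < n.+4) F i = F 0 + F 1 + F 2 + \sum_(3 <= i < n.+3) F i + F n.+3.
Proof.
rewrite -(big_mkord xpredT) big_nat_recr // big_ltn // big_ltn // big_ltn //.
by rewrite /= !addnA.
Qed.

Section TheoremMatrices.
Variable m' : nat.
Local Notation m := m'.+4.

Let o1 : 'I_m := Ordinal (isT : 1 < m).

Lemma child_colors_matA i : child_colors (matA m) i =
  if i <= 1 then set0 else if i == m'.+3 :> nat then [set ord0; o1] else [set o1].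
Proof.
apply/setP => j; rewrite !inE mxE !subSS !subn0.
have [i_le1|i_gt1] := leqP i 1.
  have -> : (i == m'.+3 :> nat) = false by apply/eqP; lia.
  by rewrite inE.
have [->|i_nmax] := eqVneq (i : nat) m'.+3.
  by rewrite ltnn andbF eqb1 !inE -!val_eqE; case: j => -[|[]].
have -> : i <= m'.+2 by have := ltn_ord i; lia.
by rewrite eqb1 inE -val_eqE.
Qed.

Lemma coloring_matrix_matA : coloring_matrix (matA m).
Proof.
move=> i j; rewrite mxE; case: ifP => _; first exact: nat_of_bool_01.
by case: ifP => _; [exact: nat_of_bool_01 | left].
Qed.

Lemma coloring_matrix_matB : coloring_matrix (matB m).
Proof.
move=> i j; rewrite mxE; case: ifP => _; first exact: nat_of_bool_01.
by case: ifP => _; [exact: nat_of_bool_01 | left].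
Qed.

Lemma child_colors_matB i : child_colors (matB m) i =
  if i == 0 :> nat then set0 else if i <= 2 then [set ord_max] else [set ord0].
Proof.
apply/setP => j; rewrite !inE mxE !subSS !subn0.
by case: i => -[|[|[|i]]] hi /=; rewrite ?eqb1 ?inE -?val_eqE.
Qed.

Lemma card_child_colors_matA i : #|child_colors (matA m) i| =
  if i <= 1 then 0 else if i == m'.+3 :> nat then 2 else 1.
Proof.
rewrite child_colors_matA; case: ifP => _; first exact: cards0.
by case: ifP => _; rewrite ?cards2 ?cards1.
Qed.

Lemma child_colors_matA_le1 i j : j \in child_colors (matA m) i -> j <= 1.
Proof.
rewrite inE mxE; case: ifP => _; first by rewrite eqb1 => /eqP ->.
by case: ifP => _; rewrite ?eqb1.
Qed.

Lemma tA_matA k : tA_is (matA m) k.+2 (2 ^ k.+1 + m'.+1).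
Proof.
have sinks i : {in child_colors (matA m) i, forall j, child_colors (matA m) j = set0}.
  by move=> j /child_colors_matA_le1 j1; rewrite child_colors_matA j1.
pose F n := (if n <= 1 then 0 else if n == m'.+3 then 2 else 1) ^ k.+1.
have -> : 2 ^ k.+1 + m'.+1 = \sum_(i < m) F i.
  rewrite sum_ord_first3_last (@eq_big_nat _ _ _ 3 m'.+3 F (fun=> 1)) => [|i /andP[i3 im]].
    by rewrite sum_nat_const_nat /F /= eqxx exp1n exp0n // muln1; lia.
  by rewrite /F (leqNgt i 1) (ltnW i3) ltn_eqF // exp1n.
apply: tA_is_sum => i; rewrite /F -card_child_colors_matA; exact: tAi_depth1.
Qed.

Lemma tAi_matB i k : tAi_is (matB m) i k.+2
  (if i == 0 :> nat then 0 else if i <= 2 then 2 ^ k else 1).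
Proof.
have B0 : child_colors (matB m) ord0 = set0 by rewrite child_colors_matB.
have [i0|i_n0] := eqVneq (i : nat) 0.
  have Bi : child_colors (matB m) i = set0 by rewrite child_colors_matB i0.
  move: (@tAi_depth1 _ (matB m) i k.+1); rewrite Bi cards0 exp0n //.
  by apply=> j; rewrite inE.
have [i_le2|i_gt2] := leqP i 2.
  rewrite -size_compositions; apply: (tAi_brooms (d := ord_max) (e := ord0)) => //.
    by rewrite child_colors_matB (negbTE i_n0) i_le2.
  by rewrite child_colors_matB.
have Bi : child_colors (matB m) i = [set ord0].
  by rewrite child_colors_matB (negbTE i_n0) leqNgt i_gt2.
move: (@tAi_depth1 _ (matB m) i k.+1); rewrite Bi cards1 exp1n.
by apply=> j; rewrite inE => /eqP ->.
Qed.

Lemma tA_matB k : tA_is (matB m) k.+2 (2 ^ k.+1 + m'.+1).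
Proof.
pose F n := if n == 0 then 0 else if n <= 2 then 2 ^ k else 1.
have -> : 2 ^ k.+1 + m'.+1 = \sum_(i < m) F i.
  rewrite sum_ord_first3_last (@eq_big_nat _ _ _ 3 m'.+3 F (fun=> 1)) => [|i /andP[i3 _]].
    by rewrite sum_nat_const_nat /F /= expnS mul2n -addnn muln1; lia.
  by rewrite /F (gtn_eqF (leq_trans (isT : 0 < 3) i3)) leqNgt i3.
exact: tA_is_sum (tAi_matB^~ k).
Qed.

Lemma card_child_colors_matB i : #|child_colors (matB m) i| <= 1.
Proof.
rewrite child_colors_matB; case: ifP => _; first by rewrite cards0.
by case: ifP => _; rewrite cards1.
Qed.

Lemma matA_matB_not_strongly : ~ strongly_tc_equiv (matA m) (matB m).
Proof.
case/strongly_tc_equiv_card_child_colors => s /(_ ord_max).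
rewrite card_child_colors_matA /= eqxx => sB.
by have := card_child_colors_matB (s ord_max); rewrite sB.
Qed.

End TheoremMatrices.

Theorem theorem37 (m : nat) (hm : (4 <= m)%N) :
  coloring_matrix (matA m) /\ coloring_matrix (matB m) /\
  (forall n : nat, (2 <= n)%N ->
     tA_is (matA m) n (2 ^ (n - 1) + m - 3) /\
     tA_is (matB m) n (2 ^ (n - 1) + m - 3)) /\
  tA_is (matA m) 1 m /\ tA_is (matB m) 1 m /\
  ~ strongly_tc_equiv (matA m) (matB m).
Proof.
case: m hm => [|[|[|[|m']]]] // _.
split; first exact: coloring_matrix_matA.
split; first exact: coloring_matrix_matB.
split.
  case=> [|[|k]] // _.
  have -> : 2 ^ (k.+2 - 1) + m'.+4 - 3 = 2 ^ k.+1 + m'.+1 by rewrite subn1 /=; lia.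
  by split; [exact: tA_matA | exact: tA_matB].
split; first exact: tA_is_one.
split; first exact: tA_is_one.
exact: matA_matB_not_strongly.
Qed.
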